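(* For every $n\in\mathbb N$, the normal PO-dilators $\mathbb{T}_n$ and $\mathbb{T}_{n+1}^-$ are normal WPO-dilators, i.e. $\mathbb{T}_n(X)$ and $\mathbb{T}_{n+1}^-(X)$ are well partial orders whenever $X$ is a well partial order.
   Context: A well partial order is a partial order in which every infinite sequence $x_0,x_1,\dots$ has indices $i<j$ with $x_i\leq x_j$. For a partial order $X$, $M(X)$ is the set of finite multisets $[x_0,\dots,x_{m-1}]$ with elements from $X$, ordered by $[x_0,\dots,x_{m-1}]\leq_{M(X)}[y_0,\dots,y_{k-1}]$ iff there is an injection $g$ with $x_i\leq_X y_{g(i)}$ for all $i<m$. For $n\in\mathbb N$ and a partial order $X$, $\mathbb{T}_n(X)$ is generated by: $\overline x$ for each $x\in X$; $i\star\sigma$ for each $\sigma=[t_0,\dots,t_{m-1}]\in M(\mathbb{T}_n(X))$ and $i<n$. For $n>0$, $\mathbb{T}_n^-(X)=\{\overline x\mid x\in X\}\cup\{0\star\sigma\mid\sigma\in M(\mathbb{T}_n(X))\}$. The partial order $\leq_{\mathbb{T}_n(X)}$ is defined recursively: $\overline x\leq t$ iff either $t=\overline y$ with $x\leq_X y$, or $t=j\star[t_0,\dots,t_{m-1}]$ and $\overline x\leq t_l$ for some $l<m$; $i\star\sigma\leq t$ iff either $t=i\star\tau$ with $\sigma\leq_{M(\mathbb{T}_n(X))}\tau$, or $t=j\star[t_0,\dots,t_{m-1}]$ with $j\geq i$ and $i\star\sigma\leq t_l$ for some $l<m$; $\mathbb{T}_n^-(X)$ carries the restricted order. (On quasi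 embeddings $f$, $\mathbb{T}_n(f)$ relabels leaves $\overline x\mapsto\overline{f(x)}$; supports are $\operatorname{supp}^{\mathbb{T}_n}_X(\overline x)=\{x\}$, $\operatorname{supp}^{\mathbb{T}_n}_X(i\star[t_0,\dots,t_{m-1}])=\bigcup_l\operatorname{supp}^{\mathbb{T}_n}_X(t_l)$; with these, $\mathbb{T}_n$ and $\mathbb{T}_{n+1}^-$ are normal PO-dilators. A WPO-dilator is a PO-dilator $W$ such that $W(X)$ is a well partial order whenever $X$ is.) *)

From Stdlib Require Import List Arith.
Import ListNotations.
Set Implicit Arguments.

Definition is_partial_order (X : Type) (le : X -> X -> Prop) : Prop :=
  (forall x, le x x) /\
  (forall x y z, le x y -> le y z -> le x z) /\
  (forall x y, le x y -> le y x -> x = y).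

Definition good_on (T : Type) (A : T -> Prop) (le : T -> T -> Prop) : Prop :=
  forall f : nat -> T, (forall k, A (f k)) ->
    exists i j, i < j /\ le (f i) (f j).

Definition is_wpo (X : Type) (le : X -> X -> Prop) : Prop :=
  is_partial_order le /\ good_on (fun _ => True) le.

(* Raw terms: leaves  \overline x  and nodes  i * [t_0,...,t_{m-1}],
   the multiset being represented by a list (order of entries irrelevant
   for the order relation below). *)
Inductive tree (X : Type) : Type :=
| Leaf : X -> tree X
| Node : nat -> list (tree X) -> tree X.
Arguments Leaf {X}.
Arguments Node {X}.

Inductive inT (X : Type) (n : nat) : tree X -> Prop :=
| inT_leaf : forall x, inT n (Leaf x)
| inT_node : forall i ts, i < n -> (forall t, In t ts -> inT n t) ->
    inT n (Node i ts).

Definition inTminus (X : Type) (n : nat) (t : tree X) : Prop :=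
  (exists x, t = Leaf x) \/
  (exists ts, t = Node 0 ts /\ forall u, In u ts -> inT n u).

(* The order <=_{T_n(X)}  (it does not depend on n; T_n^- carries the restriction). *)
Inductive tle (X : Type) (leX : X -> X -> Prop) : tree X -> tree X -> Prop :=
| tle_leaf : forall x y, leX x y -> tle leX (Leaf x) (Leaf y)
| tle_leaf_node : forall x j ts t, In t ts -> tle leX (Leaf x) t ->
    tle leX (Leaf x) (Node j ts)
| tle_node : forall i ss ts,
    (exists g : nat -> nat,
      (forall k k', k < length ss -> k' < length ss -> g k = g k' -> k = k') /\
      (forall k, k < length ss -> exists s t,
          nth_error ss k = Some s /\ nth_error ts (g k) = Some t /\ tle leX s t)) ->
    tle leX (Node i ss) (Node i ts)
| tle_node_node : forall i ss j ts t, i <= j -> In t ts ->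
    tle leX (Node i ss) t -> tle leX (Node i ss) (Node j ts).

(* Since the order is invariant
   under permuting multiset entries and is (by the paper) a partial order on
   T_n(X), this says exactly that T_n(X) (the quotient) is a wpo. *)
Definition wqo_on (T : Type) (A : T -> Prop) (le : T -> T -> Prop) : Prop :=
  (forall t, A t -> le t t) /\
  (forall s t u, A s -> A t -> A u -> le s t -> le t u -> le s u) /\
  good_on A le.

(* A gap-style induction on the range of node labels.  Let gen k (k+m) B be the trees
   built from a base B by nodes with labels in [k, k+m).  Cutting such a tree at its
   nodes labelled k shows it is generated, with labels in [k+1, k+m), from the base of
   trees whose root is in B or labelled k; so it suffices that this new base is good.
   In a minimal bad sequence of the new base, eventually every entry is a node labelled
   k; the parts of its children obtained by cutting at k-labelled nodes are smaller than
   the entry and embed into it, so they form a good set, the children are generated from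
   them with one label less (induction), and Higman's lemma applied to the lists of
   children yields a contradiction.  T_n(X) is generated from the leaves with labels in
   [0, n), and T_{n+1}^-(X) lies in the new base for k = 0. *)

From Stdlib Require Import List Arith Lia Classical ClassicalEpsilon Wf_nat.
Import ListNotations.
Set Implicit Arguments.

Section GoodSequences.
Variables (T : Type) (A : T -> Prop) (le : T -> T -> Prop).

Definition bad (f : nat -> T) : Prop := forall i j, i < j -> ~ le (f i) (f j).

Lemma good_on_sub (A' : T -> Prop) :
  (forall t, A t -> A' t) -> good_on A' le -> good_on A le.
Proof. intros HA Hg f Hf. apply Hg. auto. Qed.

Lemma good_of_no_bad :
  (forall f, (forall k, A (f k)) -> bad f -> False) -> good_on A le.
Proof.
  intros Hno f Hf. apply NNPP. intro Hij.
  apply (Hno f Hf). intros i j Hlt Hle. apply Hij. eauto.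
Qed.

End GoodSequences.

Lemma min_measure_exists {T} (P : T -> Prop) (sz : T -> nat) :
  (exists x, P x) -> exists x, P x /\ forall y, P y -> sz x <= sz y.
Proof.
  intros [x Hx]. revert Hx.
  induction x as [x IH] using (well_founded_ind (well_founded_ltof _ sz)). intro Hx.
  destruct (classic (exists y, P y /\ sz y < sz x)) as [[y [Hy Hlt]]|Hno].
  - exact (IH y Hlt Hy).
  - exists x. split; auto. intros y Hy. apply Nat.nlt_ge. eauto.
Qed.

Lemma chain_lt {T} (R : T -> T -> Prop) (a : nat -> T) :
  (forall i j k, R (a i) (a j) -> R (a j) (a k) -> R (a i) (a k)) ->
  (forall n, R (a n) (a (S n))) -> forall i j, i < j -> R (a i) (a j).
Proof. intros Htr Hstep i j Hij. induction Hij; eauto. Qed.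

Lemma increasing_chain (R : nat -> nat -> Prop) (N : nat) :
  (forall i, N <= i -> exists j, i < j /\ R i j) ->
  exists phi : nat -> nat, N <= phi 0 /\ forall n, phi n < phi (S n) /\ R (phi n) (phi (S n)).
Proof.
  intros Hnext.
  destruct (choice (fun i j => N <= i -> i < j /\ R i j)) as [c Hc].
  { intro i. destruct (le_lt_dec N i) as [HN|HN].
    - destruct (Hnext i HN) as [j Hj]. eauto.
    - exists 0. lia. }
  assert (Habove : forall n, N <= Nat.iter n c N).
  { induction n as [|n IH]; simpl; [lia|]. destruct (Hc _ IH). lia. }
  exists (fun n => Nat.iter n c N). split; [apply (Habove 0)|]. intro n. apply Hc, Habove.
Qed.

Lemma infinite_subsequence (P : nat -> Prop) :
  (forall N, exists i, N <= i /\ P i) ->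
  exists phi : nat -> nat, (forall i j, i < j -> phi i < phi j) /\ forall i, P (phi i).
Proof.
  intros Hinf.
  destruct (increasing_chain (fun _ j => P j) (N := 0)) as [phi [_ Hphi]].
  { intros i _. destruct (Hinf (S i)) as [j [Hj HP]]. exists j. split; [lia|exact HP]. }
  exists (fun i => phi (S i)). split.
  - apply (chain_lt lt (fun i => phi (S i))); [intros; lia|]. intro n. apply Hphi.
  - intro i. apply Hphi.
Qed.

Lemma good_finitely_many {T} (B : T -> Prop) (le : T -> T -> Prop) (f : nat -> T)
  (P : nat -> Prop) :
  good_on B le -> (forall i, P i -> B (f i)) ->
  (forall i j, i < j -> P i -> P j -> ~ le (f i) (f j)) ->
  exists N, forall i, N <= i -> ~ P i.
Proof.
  intros Hgood HB Hbad. apply NNPP. intro Hfin.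
  destruct (infinite_subsequence P) as [phi [Hinc HP]].
  { intro N. apply NNPP. intro HN. apply Hfin. exists N. intros i Hi HPi. eauto. }
  destruct (Hgood (fun k => f (phi k))) as [i [j [Hij Hle]]]; auto.
  exact (Hbad _ _ (Hinc _ _ Hij) (HP i) (HP j) Hle).
Qed.

Section Products.
Variables (T : Type) (A : T -> Prop) (le : T -> T -> Prop).
Hypothesis le_trans_on : forall a b c, A a -> A b -> A c -> le a b -> le b c -> le a c.
Hypothesis good_A : good_on A le.

(* Only finitely many indices [i] are terminal (no [j > i] has [le (x i) (x j)]), and from
   any later index one can move up. *)
Lemma ascending_subsequence (x : nat -> T) : (forall k, A (x k)) ->
  exists phi : nat -> nat, (forall i j, i < j -> phi i < phi j) /\
                           (forall i j, i < j -> le (x (phi i)) (x (phi j))).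
Proof.
  intros HA.
  destruct (@good_finitely_many _ A le x (fun i => forall j, i < j -> ~ le (x i) (x j)))
    as [N HN]; auto.
  destruct (increasing_chain (fun i j => le (x i) (x j)) (N := N)) as [phi [_ Hphi]].
  { intros i Hi. apply NNPP. intro Hno. apply (HN i Hi). intros j Hij Hle. eauto. }
  exists phi. split.
  - apply (chain_lt lt phi); [intros; lia|]. apply Hphi.
  - apply (chain_lt le (fun i => x (phi i))); [intros; eapply le_trans_on; eauto|]. apply Hphi.
Qed.

Lemma good_prod (T' : Type) (B : T' -> Prop) (le' : T' -> T' -> Prop) :
  good_on B le' -> forall (x : nat -> T) (y : nat -> T'),
  (forall k, A (x k)) -> (forall k, B (y k)) ->
  exists i j, i < j /\ le (x i) (x j) /\ le' (y i) (y j).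
Proof.
  intros HB x y HA HyB. destruct (ascending_subsequence x HA) as [phi [Hinc Hasc]].
  destruct (HB (fun k => y (phi k))) as [i [j [Hij Hle]]]; auto.
  exists (phi i), (phi j). auto.
Qed.

End Products.

Section MinimalBad.
Variables (T : Type) (A : T -> Prop) (le : T -> T -> Prop) (sz : T -> nat).

Definition agree (n : nat) (f g : nat -> T) : Prop := forall k, k < n -> f k = g k.

Definition bad_in (f : nat -> T) : Prop := (forall k, A (f k)) /\ bad le f.

Definition minimal_bad (f : nat -> T) : Prop :=
  bad_in f /\ forall i g, bad_in g -> agree i f g -> sz (f i) <= sz (g i).

(* Nash-Williams: each [F (S n)] is a bad sequence agreeing with [F n] below [n] whose
   [n]-th entry is of minimal size; the minimal bad sequence is the diagonal. *)
Lemma minimal_bad_exists : ~ good_on A le -> exists f, minimal_bad f.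
Proof.
  intro Hng.
  assert (Hbad : exists g, bad_in g).
  { apply NNPP. intro Hno. apply Hng, good_of_no_bad.
    intros g HA Hb. apply Hno. exists g. split; auto. }
  destruct Hbad as [g0 Hg0].
  destruct (choice (fun (p : nat * (nat -> T)) g' =>
      bad_in (snd p) -> bad_in g' /\ agree (fst p) (snd p) g' /\
      forall h, bad_in h -> agree (fst p) (snd p) h -> sz (g' (fst p)) <= sz (h (fst p))))
    as [step Hstep].
  { intros [n g]. simpl. destruct (classic (bad_in g)) as [Hg|Hg]; [|exists g; tauto].
    destruct (min_measure_exists (fun g' => bad_in g' /\ agree n g g') (fun g' => sz (g' n)))
      as [g' [[Hb Ha] Hmin]].
    - exists g. split; auto. intros k _. reflexivity.
    - exists g'. intros _. split; [exact Hb|split; [exact Ha|]].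
      intros h Hh Hgh. apply Hmin; auto. }
  set (F := fun m => nat_rect (fun _ => nat -> T) g0 (fun n g => step (n, g)) m).
  assert (HF : forall n, bad_in (F n)).
  { induction n as [|n IH]; [exact Hg0|]. exact (proj1 (Hstep (n, F n) IH)). }
  assert (Hagree : forall n m, n <= m -> agree n (F n) (F m)).
  { intros n m Hnm. induction Hnm as [|m Hnm IH]; [intros k _; reflexivity|].
    intros k Hk. rewrite (IH k Hk). apply (proj1 (proj2 (Hstep (m, F m) (HF m)))). simpl; lia. }
  assert (Hdiag : forall m k, k < m -> F m k = F (S k) k).
  { intros m k Hk. symmetry. apply Hagree; lia. }
  exists (fun i => F (S i) i). split; [split|].
  - intro k. apply (HF (S k)).
  - intros i j Hij. rewrite <- (Hdiag (S j) i) by lia. apply (HF (S j)). exact Hij.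
  - intros i g Hg Hfg.
    apply (proj2 (proj2 (Hstep (i, F i) (HF i)))); [exact Hg|].
    intros k Hk. simpl in Hk. etransitivity; [apply Hdiag, Hk|]. apply Hfg, Hk.
Qed.

Lemma good_of_no_minimal_bad : (forall f, minimal_bad f -> False) -> good_on A le.
Proof. intro Hno. apply NNPP. intro Hng. destruct (minimal_bad_exists Hng) as [f Hf]. eauto. Qed.

Definition reduct (f : nat -> T) (t : T) : Prop :=
  A t /\ exists i, sz t < sz (f i) /\ forall y, le y t -> le y (f i).

(* A bad sequence of reducts, spliced after the prefix of [f] below the least index they
   come from, is bad and smaller than [f] at that index. *)
Lemma minimal_bad_reducts_good f : minimal_bad f -> good_on (reduct f) le.
Proof.
  intros [[HfA Hfb] Hfmin]. apply good_of_no_bad. intros h Hh Hhb.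
  destruct (choice (fun k i => sz (h k) < sz (f i) /\ forall y, le y (h k) -> le y (f i)))
    as [phi Hphi].
  { intro k. apply Hh. }
  destruct (min_measure_exists (fun _ => True) phi) as [k0 [_ Hk0]]; [exists 0; auto|].
  set (g := fun i => if i <? phi k0 then f i else h (k0 + (i - phi k0))).
  assert (Hsz : sz (f (phi k0)) <= sz (g (phi k0))).
  { apply Hfmin.
    - split.
      + intro i. unfold g. destruct (i <? phi k0); [apply HfA|apply Hh].
      + intros i j Hij. unfold g.
        destruct (Nat.ltb_spec i (phi k0)), (Nat.ltb_spec j (phi k0)); try lia.
        * apply Hfb; auto.
        * intro Hle. apply (Hfb i (phi (k0 + (j - phi k0)))).
          -- specialize (Hk0 (k0 + (j - phi k0)) I). lia.
          -- apply Hphi, Hle.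
        * apply Hhb. lia.
    - intros i Hi. unfold g. destruct (Nat.ltb_spec i (phi k0)); [reflexivity|lia]. }
  unfold g in Hsz. rewrite Nat.ltb_irrefl, Nat.sub_diag, Nat.add_0_r in Hsz.
  pose proof (proj1 (Hphi k0)). lia.
Qed.

End MinimalBad.

Inductive list_emb {T} (le : T -> T -> Prop) : list T -> list T -> Prop :=
| list_emb_nil : forall l, list_emb le [] l
| list_emb_cons : forall a b l l', le a b -> list_emb le l l' -> list_emb le (a :: l) (b :: l')
| list_emb_skip : forall b l l', list_emb le l l' -> list_emb le l (b :: l').

(* In a minimal bad sequence of lists the tails are reducts, hence good, and so are the
   heads; a pair of indices good for both contradicts badness. *)
Theorem higman (T : Type) (A : T -> Prop) (le : T -> T -> Prop) :
  (forall a b c, A a -> A b -> A c -> le a b -> le b c -> le a c) ->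
  good_on A le -> good_on (Forall A) (list_emb le).
Proof.
  intros Htr HA. apply (good_of_no_minimal_bad (sz := @length T)). intros f Hf.
  pose proof (minimal_bad_reducts_good Hf) as Htails.
  destruct Hf as [[HfA Hfb] _].
  destruct (choice (fun i (p : T * list T) => f i = fst p :: snd p)) as [p Hp].
  { intro i. destruct (f i) as [|a r] eqn:E.
    - exfalso. apply (Hfb i (S i)); [lia|]. rewrite E. constructor.
    - exists (a, r). reflexivity. }
  assert (Hcons : forall i, A (fst (p i)) /\ Forall A (snd (p i))) by
    (intro i; specialize (HfA i); rewrite Hp in HfA; inversion HfA; auto).
  destruct (good_prod Htr HA Htails (fun i => fst (p i)) (fun i => snd (p i)))
    as [i [j [Hij [Hhd Htl]]]].
  - intro k. apply Hcons.
  - intro k. split; [apply Hcons|]. exists k. rewrite (Hp k). split; [simpl; lia|].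
    intros y Hy. apply list_emb_skip, Hy.
  - apply (Hfb i j Hij). rewrite (Hp i), (Hp j). constructor; auto.
Qed.

(* The order of [M(X)] as it appears in the premise of [tle_node]. *)
Definition mset_le (T : Type) (le : T -> T -> Prop) (ss ts : list T) : Prop :=
  exists g : nat -> nat,
    (forall k k', k < length ss -> k' < length ss -> g k = g k' -> k = k') /\
    (forall k, k < length ss -> exists s t,
        nth_error ss k = Some s /\ nth_error ts (g k) = Some t /\ le s t).

Section MultisetOrder.
Variables (T : Type) (le : T -> T -> Prop).

Lemma mset_le_refl ss : (forall s, In s ss -> le s s) -> mset_le le ss ss.
Proof.
  intros Hrefl. exists (fun k => k). split; auto. intros k Hk.
  destruct (nth_error ss k) as [s|] eqn:E.
  - exists s, s. repeat split; auto. apply Hrefl. eapply nth_error_In; eauto.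
  - apply nth_error_None in E. lia.
Qed.

Lemma mset_le_In ss ts s : mset_le le ss ts -> In s ss -> exists t, In t ts /\ le s t.
Proof.
  intros [g [_ Hg]] Hs. destruct (In_nth_error _ _ Hs) as [k Hk].
  destruct (Hg k) as [s' [t [E1 [E2 Hle]]]].
  - apply nth_error_Some. congruence.
  - rewrite Hk in E1. injection E1 as <-. exists t. split; auto. eapply nth_error_In; eauto.
Qed.

Lemma mset_le_trans ss ts us :
  (forall s t u, In u us -> le s t -> le t u -> le s u) ->
  mset_le le ss ts -> mset_le le ts us -> mset_le le ss us.
Proof.
  intros Htr [g [Hginj Hg]] [h [Hhinj Hh]].
  assert (Hgts : forall k, k < length ss -> g k < length ts).
  { intros k Hk. destruct (Hg k Hk) as [s [t [_ [E _]]]]. apply nth_error_Some. congruence. }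
  exists (fun k => h (g k)). split.
  - intros k k' Hk Hk' E. apply Hginj; auto.
  - intros k Hk. destruct (Hg k Hk) as [s [t [E1 [E2 Hst]]]].
    destruct (Hh (g k) (Hgts k Hk)) as [t' [u [E3 [E4 Htu]]]].
    rewrite E2 in E3. injection E3 as <-.
    exists s, u. repeat split; auto. apply Htr with t; auto. eapply nth_error_In; eauto.
Qed.

Lemma mset_le_of_emb ss ts : list_emb le ss ts -> mset_le le ss ts.
Proof.
  induction 1 as [l|a b l l' Hab H [g [Hi Hp]]|b l l' H [g [Hi Hp]]].
  - exists (fun k => k). simpl. split; intros; lia.
  - exists (fun k => match k with 0 => 0 | S k => S (g k) end). split.
    + intros [|k] [|k'] Hk Hk' E; simpl in *; try lia. f_equal. apply Hi; lia.
    + intros [|k] Hk; simpl in *; [exists a, b; auto|]. apply Hp. lia.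
  - exists (fun k => S (g k)). split.
    + intros k k' Hk Hk' E. apply Hi; auto.
    + intros k Hk. apply Hp. auto.
Qed.

End MultisetOrder.

Definition tree_In_ind (X : Type) (P : tree X -> Prop)
  (HL : forall x, P (Leaf x))
  (HN : forall i ts, (forall t, In t ts -> P t) -> P (Node i ts)) : forall t, P t :=
  fix IH t := match t with
  | Leaf x => HL x
  | Node i ts => HN i ts
      ((fix IHs (ts : list (tree X)) : forall u, In u ts -> P u :=
          match ts with
          | [] => fun u H => match H with end
          | t' :: ts' => fun u H =>
              match H with
              | or_introl E => eq_ind t' P (IH t') u E
              | or_intror H' => IHs ts' u H'
              end
          end) ts)
  end.

Fixpoint tsize (X : Type) (t : tree X) : nat :=
  match t with Leaf _ => 1 | Node _ ts => S (list_sum (map (@tsize X) ts)) end.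

Lemma tsize_In (X : Type) i (t : tree X) ts : In t ts -> tsize t < tsize (Node i ts).
Proof.
  induction ts as [|u ts IH]; simpl; [tauto|]. intros [->|H]; [lia|].
  specialize (IH H). simpl in IH. lia.
Qed.

Definition root_below (X : Type) (k : nat) (t : tree X) : Prop :=
  match t with Leaf _ => True | Node i _ => i < k end.

Lemma root_below_mono (X : Type) a b (t : tree X) : a <= b -> root_below a t -> root_below b t.
Proof. destruct t; simpl; auto; lia. Qed.

Section TreeOrder.
Variables (X : Type) (leX : X -> X -> Prop).
Hypothesis leX_refl : forall x, leX x x.
Hypothesis leX_trans : forall x y z, leX x y -> leX y z -> leX x z.
Notation le := (tle leX).

Lemma tle_refl t : le t t.
Proof.
  induction t as [x|i ts IH] using tree_In_ind; constructor; auto.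
  apply (mset_le_refl _ _ IH).
Qed.

Lemma tle_root_below s i ts : le s (Node i ts) -> root_below (S i) s.
Proof. intro H. inversion H; subst; simpl; auto; lia. Qed.

Lemma tle_into_node e u j ts : In u ts -> le e u -> root_below (S j) e -> le e (Node j ts).
Proof.
  destruct e; simpl; intros.
  - eapply tle_leaf_node; eauto.
  - eapply tle_node_node; eauto. lia.
Qed.

Lemma tle_trans s t u : le s t -> le t u -> le s u.
Proof.
  revert s t. induction u as [z|j us IH] using tree_In_ind; intros s t Hst Htu.
  - inversion Htu; subst. inversion Hst; subst. constructor. eauto.
  - inversion Htu as [| y j' us' u' Hin Hyu | i ts us' Hts | i ts j' us' u' Hij Hin Htu']; subst.
    + inversion Hst; subst. apply tle_leaf_node with u'; auto. apply IH with (Leaf y); auto.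
    + change (mset_le le ts us) in Hts.
      inversion Hst
        as [| x i' ts' t' Hin Hxt | i' ss ts' Hss | i' ss i'' ts' t' Hij Hin Hst']; subst.
      * destruct (mset_le_In _ Hts Hin) as [u' [Hu' Htu']].
        apply tle_leaf_node with u'; eauto.
      * apply tle_node. change (mset_le le ss us).
        apply mset_le_trans with ts; auto. intros a b c Hc. apply IH, Hc.
      * destruct (mset_le_In _ Hts Hin) as [u' [Hu' Htu']].
        apply tle_node_node with u'; eauto.
    + apply tle_into_node with u'; eauto.
      eapply root_below_mono, tle_root_below; [|exact Hst]. lia.
Qed.

End TreeOrder.

Section Gap.
Variables (X : Type) (leX : X -> X -> Prop).
Hypothesis leX_refl : forall x, leX x x.
Hypothesis leX_trans : forall x y z, leX x y -> leX y z -> leX x z.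
Notation le := (tle leX).

Inductive gen (k N : nat) (B : tree X -> Prop) : tree X -> Prop :=
| gen_base : forall t, B t -> gen k N B t
| gen_node : forall j ts, k <= j -> j < N -> (forall t, In t ts -> gen k N B t) ->
    gen k N B (Node j ts).

Lemma gen_mono k N (B B' : tree X -> Prop) :
  (forall t, B t -> B' t) -> forall t, gen k N B t -> gen k N B' t.
Proof. intros HB t Ht. induction Ht; [apply gen_base | apply gen_node]; auto. Qed.

Lemma gen_node_inv k N B j ts :
  gen k N B (Node j ts) -> B (Node j ts) \/ forall t, In t ts -> gen k N B t.
Proof. intros H. inversion H; subst; auto. Qed.

Definition gen_root (k N : nat) (B : tree X -> Prop) (t : tree X) : Prop :=
  gen k N B t /\ (B t \/ exists ts, t = Node k ts).

Lemma gen_root_below k N B :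
  (forall t, B t -> root_below k t) -> forall t, gen_root k N B t -> root_below (S k) t.
Proof.
  intros Hlow t [_ [HB|[ts ->]]]; simpl; [|lia].
  eapply root_below_mono, Hlow, HB. lia.
Qed.

Inductive piece (k : nat) : tree X -> tree X -> Prop :=
| piece_self : forall t, piece k t t
| piece_down : forall t j us v, k < j -> In v us -> piece k t v -> piece k t (Node j us).

Lemma piece_tsize k e u : piece k e u -> tsize e <= tsize u.
Proof. induction 1 as [|t j us v _ Hv _ IH]; [lia|]. pose proof (tsize_In j _ _ Hv). lia. Qed.

Lemma piece_tle k e u : piece k e u -> root_below (S k) e -> le e u.
Proof.
  induction 1 as [|t j us v Hj Hv _ IH]; intros He; [apply tle_refl; auto|].
  apply tle_into_node with v; auto. eapply root_below_mono; [|exact He]. lia.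
Qed.

Lemma piece_of_child_below k e u ts : In u ts -> piece k e u -> root_below (S k) e ->
  le e (Node k ts) /\ tsize e < tsize (Node k ts).
Proof.
  intros Hu Hp He. split.
  - apply tle_into_node with u; auto. apply piece_tle with k; auto.
  - pose proof (piece_tsize Hp). pose proof (tsize_In k _ _ Hu). lia.
Qed.

Lemma gen_decomp k N B u : gen k N B u ->
  gen (S k) N (fun e => gen_root k N B e /\ piece k e u) u.
Proof.
  induction 1 as [t Ht|j ts Hkj HjN Hts IH].
  - apply gen_base. split; [|constructor]. split; [apply gen_base|left]; auto.
  - destruct (Nat.eq_dec j k) as [->|Hne].
    + apply gen_base. split; [|constructor]. split; [apply gen_node|right]; eauto.
    + apply gen_node; try lia. intros t Ht. eapply gen_mono; [|apply IH, Ht].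
      intros e [HD Hp]. split; auto. apply piece_down with t; auto. lia.
Qed.

Definition children (t : tree X) : list (tree X) :=
  match t with Leaf _ => [] | Node _ ts => ts end.

Section Step.
Variable m : nat.
Hypothesis good_gen_m : forall k B, (forall t, B t -> root_below k t) -> good_on B le ->
  good_on (gen k (k + m) B) le.

Lemma good_gen_root k B : (forall t, B t -> root_below k t) -> good_on B le ->
  good_on (gen_root k (S k + m) B) le.
Proof.
  intros Hlow HB. set (D := gen_root k (S k + m) B).
  apply (good_of_no_minimal_bad (sz := @tsize X)). intros d Hd.
  set (R := reduct D le (@tsize X) d).
  assert (HR : good_on (gen (S k) (S k + m) R) le).
  { apply good_gen_m; [|exact (minimal_bad_reducts_good Hd)].
    intros t [HDt _]. apply (gen_root_below Hlow HDt). }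
  destruct Hd as [[HdD Hdb] _].
  destruct (@good_finitely_many _ B le d (fun i => B (d i))) as [N HN]; auto.
  assert (Hnode : forall i, N <= i ->
    d i = Node k (children (d i)) /\ Forall (gen (S k) (S k + m) R) (children (d i))).
  { intros i Hi. destruct (HdD i) as [Hgen [HBi|[ts Eq]]]; [exfalso; exact (HN i Hi HBi)|].
    rewrite Eq in Hgen |- *. split; [reflexivity|]. apply Forall_forall. intros u Hu.
    destruct (gen_node_inv Hgen) as [HBn|Hts]; [exfalso; apply (HN i Hi); congruence|].
    eapply gen_mono; [|apply gen_decomp, Hts, Hu].
    intros e [HDe Hp]. split; [exact HDe|]. exists i. rewrite Eq.
    destruct (piece_of_child_below ts Hu Hp (gen_root_below Hlow HDe)) as [Hle Hsz].
    split; [exact Hsz|]. intros y Hy. apply tle_trans with e; auto. }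
  destruct (higman (A := gen (S k) (S k + m) R) (le := le))
    with (f := fun a => children (d (N + a))) as [a [b [Hab Hemb]]].
  - intros s t u _ _ _. apply tle_trans; auto.
  - exact HR.
  - intro a. apply Hnode. lia.
  - apply (Hdb (N + a) (N + b)); [lia|].
    rewrite (proj1 (Hnode (N + a) ltac:(lia))), (proj1 (Hnode (N + b) ltac:(lia))).
    apply tle_node, mset_le_of_emb, Hemb.
Qed.

End Step.

Lemma good_gen m : forall k B, (forall t, B t -> root_below k t) -> good_on B le ->
  good_on (gen k (k + m) B) le.
Proof.
  induction m as [|m IH]; intros k B Hlow HB.
  - apply good_on_sub with B; auto. intros t Ht. destruct Ht; [auto|lia].
  - rewrite Nat.add_succ_r.
    apply good_on_sub with (gen (S k) (S k + m) (gen_root k (S k + m) B)).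
    + intros t Ht. eapply gen_mono; [|apply gen_decomp, Ht]. intros e [He _]; exact He.
    + apply IH; [apply gen_root_below, Hlow|]. apply good_gen_root; auto.
Qed.

End Gap.

Lemma good_on_image (S T : Type) (leS : S -> S -> Prop) (le : T -> T -> Prop) (F : S -> T) :
  good_on (fun _ => True) leS -> (forall x y, leS x y -> le (F x) (F y)) ->
  good_on (fun t => exists x, t = F x) le.
Proof.
  intros Hg HF f Hf. destruct (choice _ Hf) as [x Hx].
  destruct (Hg x) as [i [j [Hij Hle]]]; auto.
  exists i, j. rewrite (Hx i), (Hx j). auto.
Qed.

Definition leaves (X : Type) (t : tree X) : Prop := exists x, t = Leaf x.

Lemma inT_gen (X : Type) n (t : tree X) : inT n t -> gen 0 n (@leaves X) t.
Proof.
  induction 1 as [x|i ts Hi _ IH].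
  - apply gen_base. exists x. reflexivity.
  - apply gen_node; auto. lia.
Qed.

Lemma inTminus_gen_root (X : Type) n (t : tree X) :
  inTminus (S n) t -> gen_root 0 (S n) (@leaves X) t.
Proof.
  intros [[x ->]|[ts [-> Hts]]].
  - split; [apply gen_base|left]; exists x; reflexivity.
  - split; [|right; eauto]. apply gen_node; [lia|lia|]. intros u Hu. apply inT_gen, Hts, Hu.
Qed.

Lemma tle_wqo_on (X : Type) (leX : X -> X -> Prop) (A : tree X -> Prop) :
  (forall x, leX x x) -> (forall x y z, leX x y -> leX y z -> leX x z) ->
  good_on A (tle leX) -> wqo_on A (tle leX).
Proof.
  intros Hrefl Htrans Hgood. split; [|split; [|exact Hgood]].
  - intros t _. apply tle_refl, Hrefl.
  - intros s t u _ _ _. apply tle_trans, Htrans.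
Qed.

Theorem corollary6p6 :
  forall (n : nat) (X : Type) (leX : X -> X -> Prop),
    is_wpo leX ->
    wqo_on (inT n) (tle leX) /\ wqo_on (inTminus (S n)) (tle leX).
Proof.
  intros n X leX [[Hrefl [Htrans _]] Hgood].
  assert (Hleaves : good_on (@leaves X) (tle leX)).
  { apply good_on_image with leX; auto. intros x y Hxy. constructor. exact Hxy. }
  assert (Hlow : forall t : tree X, leaves t -> root_below 0 t) by (intros t [x ->]; exact I).
  split; apply tle_wqo_on; auto.
  - apply good_on_sub with (gen 0 n (@leaves X)); [apply inT_gen|].
    exact (good_gen Hrefl Htrans n Hlow Hleaves).
  - apply good_on_sub with (gen_root 0 (S n) (@leaves X)); [apply inTminus_gen_root|].
    exact (good_gen_root Hrefl Htrans (good_gen Hrefl Htrans n) Hlow Hleaves).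
Qed.
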